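(* Let $\epsilon\neq 0$ be a constant. Let the functions $m^i_{\ e}$ ($3\le i\le e\le N$, with $m^i_{\ e}=0$ for $e<i$ and $m^i_{\ i}>0$) be smooth functions of the variables $(x^3-\epsilon u, x^4,\dots,x^N)$ only. Put $g_{ef}=\sum_i m^i_{\ e}m^i_{\ f}$ and write $m_{33}=m^3_{\ 3}$. Let the following be arbitrary smooth functions: - $H(u,x^3,\dots,x^N)$; - $F_2$ and $E_n$ ($n=4,\dots,N$), functions of $(x^3-\epsilon u,x^4,\dots,x^N)$; - $f(x^3,\dots,x^N)$. Let $\Phi(u,x^3,\dots,x^N)$ be any smooth function with $\partial_u\Phi = \partial_3 H$, and fix $u_0$. Define $$\hat W_3 = \Phi + \epsilon^{-1}\big(F_2+f\big),\qquad L_n = \partial_nH + \epsilon\,\partial_n\Phi+\partial_n f,$$ $$\hat W_n(u,x)=\int_{u_0}^{u} L_n(z,x^3-\epsilon u+\epsilon z,x^4,\dots,x^N)\,dz+E_n(x^3-\epsilon u,x^4,\dots,x^N).$$ Then the vector field $$X = n + F_2\,\ell+\epsilon\, m_{33}\, m_3$$ is a Killing vector field of the metric $g = 2\,du\,\big(dv + H\,du + \hat W_e\,dx^e\big) + g_{ef}\,dx^e dx^f$, with $$g(X,X) = 2F_2+\epsilon^2 m_{33}^{\,2}.$$ In particular, for any choice of $F_2\le -\tfrac12\epsilon^2m_{33}^{\,2}$ (possible because $F_2$ and $m_{33}$ depend on the same variables), $X$ is everywhere timelike or null.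
   Context: Work on an open set with coordinates $(u,v,x^3,\dots,x^N)$, $N\ge 3$. The indices $e,f$ run over $3,\dots,N$ and are summed, and the indices $n,m$ run over $4,\dots,N$. Derivatives are written $\partial_u=\partial/\partial u$ and $\partial_e=\partial/\partial x^e$. The frame vectors associated with the metric $g$ above are $$\ell=\partial_v,\qquad n=\partial_u - H\,\partial_v,\qquad m_i = m_i^{\ e}\big(\partial_e-\hat W_e\,\partial_v\big),$$ where $m_i^{\ e}$ is the inverse of the matrix $(m^i_{\ e})$, i.e. $\sum_e m^i_{\ e}m_j^{\ e}=\delta_{ij}$. Since $(m^i_{\ e})$ is upper triangular, $m_3 = m_{33}^{-1}\big(\partial_3 - \hat W_3\,\partial_v\big)$. For a vector field $X = X_1 n+X_2\ell+\sum_i X_im_i$ one has $g(X,X) = 2X_1X_2+\sum_i X_i^2$. *)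

From Stdlib Require Import Reals Lra List Arith Bool.
Open Scope R_scope.

(* A point of the coordinate space: coordinate 1 = u, 2 = v, 3..N = x^3..x^N.
   Coordinates with index 0 or > N are ignored (all functions used below
   are required not to depend on them). *)
Definition Point := nat -> R.

Definition upd (p : Point) (i : nat) (t : R) : Point :=
  fun j => if Nat.eqb j i then t else p j.

Definition kdelta (i j : nat) : R := if Nat.eqb i j then 1 else 0.

Definition has_pd (f : Point -> R) (i : nat) (p : Point) (l : R) : Prop :=
  derivable_pt_lim (fun t => f (upd p i t)) (p i) l.

Definition depends_only_on (S : nat -> Prop) (f : Point -> R) : Prop :=
  forall p q : Point, (forall i, S i -> p i = q i) -> f p = f q.

Definition contN (N : nat) (f : Point -> R) : Prop :=
  forall (p : Point) (eps : R), 0 < eps -> exists delta, 0 < delta /\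
    forall q : Point, (forall i, (1 <= i <= N)%nat -> Rabs (q i - p i) < delta) ->
      Rabs (f q - f p) < eps.

Fixpoint CkN (N k : nat) (f : Point -> R) : Prop :=
  match k with
  | O => contN N f
  | S k' => contN N f /\
      forall i, (1 <= i <= N)%nat ->
        exists g : Point -> R, (forall p, has_pd f i p (g p)) /\ CkN N k' g
  end.

Definition smoothN (N : nat) (f : Point -> R) : Prop := forall k, CkN N k f.

Definition sumN (N : nat) (F : nat -> R) : R :=
  fold_right Rplus 0 (map F (seq 1 N)).

(* the substitution x^3 |-> x^3 - eps u : a function of (x^3 - eps u, x^4..x^N)
   is  fun p => ft (shift eps p)  with ft depending only on x^3..x^N. *)
Definition shift (eps : R) (p : Point) : Point := upd p 3 (p 3%nat - eps * p 1%nat).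

(* the integration path  z |-> (z, v, x^3 - eps u + eps z, x^4, ...) *)
Definition path (eps : R) (p : Point) (z : R) : Point :=
  upd (upd p 1 z) 3 (p 3%nat - eps * p 1%nat + eps * z).


(* Metric components g_ab, a,b in 1..N, of
   g = 2 du (dv + H du + W_e dx^e) + g_ef dx^e dx^f,  g_ef = sum_i m^i_e m^i_f. *)
Definition gmet (N : nat) (H : Point -> R) (W : nat -> Point -> R)
  (m : nat -> nat -> Point -> R) (a b : nat) (p : Point) : R :=
  if Nat.eqb a 1 then
    (if Nat.eqb b 1 then 2 * H p
     else if Nat.eqb b 2 then 1
     else if (3 <=? b)%nat && (b <=? N)%nat then W b p else 0)
  else if Nat.eqb a 2 then
    (if Nat.eqb b 1 then 1 else 0)
  else if (3 <=? a)%nat && (a <=? N)%nat then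
    (if Nat.eqb b 1 then W a p
     else if (3 <=? b)%nat && (b <=? N)%nat then
       fold_right Rplus 0 (map (fun i => m i a p * m i b p) (seq 3 (N - 2)))
     else 0)
  else 0.

Definition gform (N : nat) (g : nat -> nat -> Point -> R) (p : Point)
  (Y Z : nat -> R) : R :=
  sumN N (fun a => sumN N (fun b => g a b p * Y a * Z b)).

(* Killing equation (L_X g)_ab = 0 in coordinates:
   X^c d_c g_ab + g_cb d_a X^c + g_ac d_b X^c = 0. *)
Definition killing (N : nat) (g : nat -> nat -> Point -> R)
  (X : Point -> nat -> R) : Prop :=
  forall (p : Point) (a b : nat), (1 <= a <= N)%nat -> (1 <= b <= N)%nat ->
    exists Dg DXa DXb : nat -> R,
      (forall c, (1 <= c <= N)%nat ->
         has_pd (g a b) c p (Dg c) /\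
         has_pd (fun q => X q c) a p (DXa c) /\
         has_pd (fun q => X q c) b p (DXb c)) /\
      sumN N (fun c => X p c * Dg c + g c b p * DXa c + g a c p * DXb c) = 0.

(* Frame vectors (components in the coordinates u=1, v=2, x^e=e):
   l = d_v,  n = d_u - H d_v,  m_3 = m33^{-1} (d_3 - W_3 d_v). *)
Definition ellv (p : Point) (c : nat) : R := kdelta c 2.
Definition nvec (H : Point -> R) (p : Point) (c : nat) : R :=
  kdelta c 1 - H p * kdelta c 2.
Definition m3vec (m33 : Point -> R) (W3 : Point -> R) (p : Point) (c : nat) : R :=
  / m33 p * (kdelta c 3 - W3 p * kdelta c 2).

(* In coordinates (u, v, x^3, ..., x^N) the field X = n + F_2 l + eps m33 m_3 is
   X = d_u + Y d_v + eps d_3 with Y = -(H + eps Phi + f) ([frame_field_eq]).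
   Since g(d_v, .) = du, the Killing equation (L_X g)_ab = 0 reduces, for
   v-independent components, to
       (d_u + eps d_3) g_ab + delta_b1 d_a Y + delta_a1 d_b Y = 0
   ([killing_reduction]).  The operator d_u + eps d_3 differentiates along the
   characteristics x^3 - eps u = const, and the components are handled by:
   - functions of (x^3 - eps u, x^4, ..., x^N) (g_ef, F_2, E_n) are annihilated
     ([transport_shifted]);
   - the integral of L_n along the characteristics is mapped to L_n
     ([transport_path_integral]), by differentiation under the integral sign
     ([leibniz_rule], from Coquelicot's parametric integral theorem);
   - for g_uu = 2H and W_3 the cancellation uses d_u Phi = d_3 H. *)

From Stdlib Require Import Reals Lra List Arith Lia FunctionalExtensionality.
From Coquelicot Require Import Coquelicot.
Open Scope R_scope.

Lemma upd_same (p : Point) (i : nat) (t : R) : upd p i t i = t.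
Proof. unfold upd. now rewrite Nat.eqb_refl. Qed.

Lemma upd_other (p : Point) (i j : nat) (t : R) : j <> i -> upd p i t j = p j.
Proof. intro Hji. unfold upd. now destruct (Nat.eqb_spec j i). Qed.

Lemma upd_self (p : Point) (i : nat) : upd p i (p i) = p.
Proof.
  apply functional_extensionality. intro j. unfold upd.
  now destruct (Nat.eqb_spec j i); subst.
Qed.

Lemma upd_upd (p : Point) (i : nat) (s t : R) : upd (upd p i s) i t = upd p i t.
Proof.
  apply functional_extensionality. intro j. unfold upd. now destruct (Nat.eqb_spec j i).
Qed.

Lemma depends_upd (S : nat -> Prop) (F : Point -> R) (c : nat) (q : Point) (t : R) :
  depends_only_on S F -> ~ S c -> F (upd q c t) = F q.
Proof.
  intros HF Hc. apply HF. intros i Hi. apply upd_other. intros ->. contradiction.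
Qed.

Lemma depends_only_on_weaken (S S' : nat -> Prop) (F : Point -> R) :
  (forall i, S i -> S' i) -> depends_only_on S F -> depends_only_on S' F.
Proof. intros HSS' HF p q Hpq. apply HF. intros i Hi. apply Hpq, HSS', Hi. Qed.

Lemma has_pd_ext (F G : Point -> R) (c : nat) (p : Point) (d : R) :
  (forall q, F q = G q) -> has_pd F c p d -> has_pd G c p d.
Proof.
  intros HFG Hd. replace G with F; [exact Hd|]. now apply functional_extensionality.
Qed.

Lemma has_pd_unique (F : Point -> R) (c : nat) (p : Point) (d d' : R) :
  has_pd F c p d -> has_pd F c p d' -> d = d'.
Proof. apply uniqueness_limite. Qed.

Lemma has_pd_value (F : Point -> R) (c : nat) (p : Point) (d d' : R) :
  has_pd F c p d -> d = d' -> has_pd F c p d'.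
Proof. intros Hd <-. exact Hd. Qed.

Lemma has_pd_const (F : Point -> R) (c : nat) (p : Point) :
  (forall t, F (upd p c t) = F p) -> has_pd F c p 0.
Proof.
  intro HF. unfold has_pd.
  replace (fun t => F (upd p c t)) with (fct_cte (F p)).
  - apply derivable_pt_lim_const.
  - apply functional_extensionality. intro t. now rewrite HF.
Qed.

Lemma has_pd_indep (S : nat -> Prop) (F : Point -> R) (c : nat) (p : Point) :
  depends_only_on S F -> ~ S c -> has_pd F c p 0.
Proof. intros HF Hc. apply has_pd_const. intro t. exact (depends_upd S F c p t HF Hc). Qed.

Lemma has_pd_plus (A B : Point -> R) (c : nat) (p : Point) (a b : R) :
  has_pd A c p a -> has_pd B c p b -> has_pd (fun q => A q + B q) c p (a + b).
Proof. apply (derivable_pt_lim_plus (fun t => A (upd p c t)) (fun t => B (upd p c t))). Qed.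

Lemma has_pd_scal (A : Point -> R) (k : R) (c : nat) (p : Point) (a : R) :
  has_pd A c p a -> has_pd (fun q => k * A q) c p (k * a).
Proof. apply (derivable_pt_lim_scal (fun t => A (upd p c t))). Qed.

Lemma has_pd_mult (A B : Point -> R) (c : nat) (p : Point) (a b : R) :
  has_pd A c p a -> has_pd B c p b -> has_pd (fun q => A q * B q) c p (a * B p + A p * b).
Proof.
  intros Ha Hb. unfold has_pd.
  pose proof (derivable_pt_lim_mult _ _ _ _ _ Ha Hb) as Hab. cbv beta in Hab.
  now rewrite upd_self in Hab.
Qed.

Lemma has_pd_depends (S : nat -> Prop) (F D : Point -> R) (c : nat) :
  depends_only_on S F -> S c -> (forall q, has_pd F c q (D q)) -> depends_only_on S D.
Proof.
  intros HF Hc HD q q' Hqq'.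
  assert (Hline : (fun t => F (upd q c t)) = (fun t => F (upd q' c t))).
  { apply functional_extensionality. intro t. apply HF. intros i Hi. unfold upd.
    destruct (Nat.eqb_spec i c); auto. }
  pose proof (HD q) as Hq. pose proof (HD q') as Hq'. unfold has_pd in Hq, Hq'.
  rewrite Hline in Hq. rewrite <- (Hqq' c Hc) in Hq'.
  exact (uniqueness_limite _ _ _ _ Hq Hq').
Qed.

Lemma has_pd_reparam (F : Point -> R) (P : R -> Point) (q : Point) (k : nat)
    (beta t0 d : R) :
  (forall t, F (P t) = F (upd q k (q k + beta * (t - t0)))) ->
  has_pd F k q d -> derivable_pt_lim (fun t => F (P t)) t0 (beta * d).
Proof.
  intros HP Hd.
  replace (fun t => F (P t)) with (fun t => F (upd q k (q k + beta * (t - t0))))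
    by (apply functional_extensionality; intro t; now rewrite HP).
  rewrite Rmult_comm.
  apply (derivable_pt_lim_comp (fun t => q k + beta * (t - t0)) (fun s => F (upd q k s))).
  - apply is_derive_Reals. auto_derive; [exact I|ring].
  - replace (q k + beta * (t0 - t0)) with (q k) by ring. exact Hd.
Qed.

Definition all_pd (N : nat) (F : Point -> R) (p : Point) : Prop :=
  forall c, (1 <= c <= N)%nat -> exists d, has_pd F c p d.

Lemma contN_lin (N : nat) (A B : Point -> R) (l : R) :
  contN N A -> contN N B -> contN N (fun q => A q + l * B q).
Proof.
  intros HA HB p e He.
  assert (Hl : 0 < Rabs l + 1) by (pose proof (Rabs_pos l); lra).
  destruct (HA p (e / 2)) as [d1 [Hd1 H1]]; [lra|].
  destruct (HB p (e / 2 / (Rabs l + 1))) as [d2 [Hd2 H2]];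
    [apply Rdiv_lt_0_compat; lra|].
  exists (Rmin d1 d2). split; [now apply Rmin_pos|]. intros q Hq.
  specialize (H1 q (fun i Hi => Rlt_le_trans _ _ _ (Hq i Hi) (Rmin_l _ _))).
  specialize (H2 q (fun i Hi => Rlt_le_trans _ _ _ (Hq i Hi) (Rmin_r _ _))).
  assert (HlB : Rabs l * Rabs (B q - B p) <= e / 2).
  { apply Rmult_lt_compat_r with (r := Rabs l + 1) in H2; [|lra].
    replace (e / 2 / (Rabs l + 1) * (Rabs l + 1)) with (e / 2) in H2 by (field; lra).
    pose proof (Rabs_pos l). pose proof (Rabs_pos (B q - B p)). nra. }
  replace (A q + l * B q - (A p + l * B p)) with ((A q - A p) + l * (B q - B p)) by ring.
  eapply Rle_lt_trans; [apply Rabs_triang|]. rewrite Rabs_mult. lra.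
Qed.

Lemma CkN_lin (N k : nat) (A B : Point -> R) (l : R) :
  CkN N k A -> CkN N k B -> CkN N k (fun q => A q + l * B q).
Proof.
  revert A B. induction k as [|k IHk]; intros A B HA HB.
  - now apply contN_lin.
  - destruct HA as [CA DA], HB as [CB DB]. split; [now apply contN_lin|].
    intros c Hc. destruct (DA c Hc) as [gA [HgA CgA]], (DB c Hc) as [gB [HgB CgB]].
    exists (fun q => gA q + l * gB q). split; [|now apply IHk].
    intro p. apply has_pd_plus; [apply HgA|apply has_pd_scal, HgB].
Qed.

Lemma smooth_lin (N : nat) (A B : Point -> R) (l : R) :
  smoothN N A -> smoothN N B -> smoothN N (fun q => A q + l * B q).
Proof. intros HA HB k. now apply CkN_lin. Qed.

Lemma smooth_cont (N : nat) (F : Point -> R) : smoothN N F -> contN N F.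
Proof. intro HF. exact (HF 0%nat). Qed.

Lemma smooth_deriv (N : nat) (F D : Point -> R) (c : nat) :
  smoothN N F -> (1 <= c <= N)%nat -> (forall p, has_pd F c p (D p)) -> smoothN N D.
Proof.
  intros HF Hc HD k. destruct (HF (S k)) as [_ Hk]. destruct (Hk c Hc) as [g [Hg Cg]].
  replace D with g; [exact Cg|].
  apply functional_extensionality. intro p. exact (has_pd_unique F c p _ _ (Hg p) (HD p)).
Qed.

Lemma smooth_has_pd (N : nat) (F : Point -> R) (c : nat) :
  smoothN N F -> (1 <= c <= N)%nat ->
  exists D, (forall p, has_pd F c p (D p)) /\ smoothN N D.
Proof.
  intros HF Hc. destruct (HF 1%nat) as [_ H1]. destruct (H1 c Hc) as [D [HD _]].
  exists D. split; [exact HD|]. exact (smooth_deriv N F D c HF Hc HD).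
Qed.

Lemma smooth_all_pd (N : nat) (F : Point -> R) (p : Point) : smoothN N F -> all_pd N F p.
Proof.
  intros HF c Hc. destruct (smooth_has_pd N F c HF Hc) as [D [HD _]]. now exists (D p).
Qed.

Lemma fold_sum_nonneg (F : nat -> R) (l : list nat) :
  (forall j, 0 <= F j) -> 0 <= fold_right Rplus 0 (map F l).
Proof.
  intro HF. induction l as [|j l IHl]; simpl; [lra|]. pose proof (HF j). lra.
Qed.

Lemma sumN_ge_term (N : nat) (F : nat -> R) (i : nat) :
  (1 <= i <= N)%nat -> (forall j, 0 <= F j) -> F i <= sumN N F.
Proof.
  intros Hi HF. unfold sumN.
  assert (Hin : In i (seq 1 N)) by (apply in_seq; lia).
  induction (seq 1 N) as [|j l IHl]; simpl in *; [contradiction|].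
  destruct Hin as [->|Hin].
  - pose proof (fold_sum_nonneg F l HF). lra.
  - pose proof (HF j). specialize (IHl Hin). lra.
Qed.

(* A function continuous on R^N is jointly continuous along any affine plane
   (t, z) |-> A + t B + z C; the modulus only needs a bound on B and C. *)
Lemma continuity_2d_affine (N : nat) (D : Point -> R) (A B C : Point) (t0 z0 : R) :
  contN N D -> continuity_2d_pt (fun t z => D (fun i => A i + t * B i + z * C i)) t0 z0.
Proof.
  intros HD e.
  destruct (HD (fun i => A i + t0 * B i + z0 * C i) e (cond_pos e)) as [d [Hd Hq]].
  assert (Hpos : forall j, 0 <= Rabs (B j) + Rabs (C j)).
  { intro j. pose proof (Rabs_pos (B j)). pose proof (Rabs_pos (C j)). lra. }
  set (K := sumN N (fun i => Rabs (B i) + Rabs (C i)) + 1).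
  assert (HK : 1 <= K).
  { unfold K, sumN. pose proof (fold_sum_nonneg _ (seq 1 N) Hpos). lra. }
  assert (Hdel : 0 < d / K) by (apply Rdiv_lt_0_compat; lra).
  exists (mkposreal _ Hdel). simpl. intros t z Ht Hz. apply Hq. intros i Hi.
  assert (HBC : Rabs (B i) + Rabs (C i) <= K - 1).
  { unfold K. pose proof (sumN_ge_term N _ i Hi Hpos). lra. }
  replace (A i + t * B i + z * C i - (A i + t0 * B i + z0 * C i))
    with ((t - t0) * B i + (z - z0) * C i) by ring.
  eapply Rle_lt_trans; [apply Rabs_triang|]. rewrite !Rabs_mult.
  pose proof (Rabs_pos (B i)). pose proof (Rabs_pos (C i)).
  apply Rle_lt_trans with (d / K * (Rabs (B i) + Rabs (C i))).
  { rewrite Rmult_plus_distr_l.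
    apply Rplus_le_compat; apply Rmult_le_compat_r; lra. }
  apply Rle_lt_trans with (d / K * (K - 1)); [nra|].
  replace d with (d / K * K) at 2 by (field; lra). nra.
Qed.
Lemma continuity_2d_pt_snd (phi : R -> R -> R) (t z : R) :
  continuity_2d_pt phi t z -> continuity_pt (phi t) z.
Proof.
  intros Hphi. apply continuity_pt_filterlim. intros P [e HP].
  destruct (Hphi e) as [d Hd]. exists d. intros z' Hz'.
  apply HP, Hd; [|exact Hz']. rewrite Rminus_eq_0, Rabs_R0. apply cond_pos.
Qed.

Lemma leibniz_rule (phi psi : R -> R -> R) (b : R -> R) (a t0 db : R) :
  (forall t z, derivable_pt_lim (fun s => phi s z) t (psi t z)) ->
  (forall t z, continuity_2d_pt phi t z) ->
  (forall t z, continuity_2d_pt psi t z) ->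
  derivable_pt_lim b t0 db ->
  derivable_pt_lim (fun t => RInt (phi t) a (b t)) t0
    (RInt (psi t0) a (b t0) + phi t0 (b t0) * db).
Proof.
  intros Hd Hphi Hpsi Hb.
  assert (Hint : forall t c d, ex_RInt (phi t) c d).
  { intros t c d. apply (@ex_RInt_continuous R_CompleteNormedModule). intros z _.
    apply continuity_pt_filterlim, continuity_2d_pt_snd, Hphi. }
  assert (Hex_derive : forall t z, ex_derive (fun s => phi s z) t).
  { intros t z. exists (psi t z). apply is_derive_Reals, Hd. }
  assert (Hcont_derive : forall t z, continuity_2d_pt (fun u v => Derive (fun s => phi s v) u) t z).
  { intros t z. eapply continuity_2d_pt_ext; [|apply (Hpsi t z)].
    intros u v. symmetry. apply is_derive_unique, is_derive_Reals, Hd. }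
  apply is_derive_Reals.
  replace (RInt (psi t0) a (b t0)) with (RInt (fun z => Derive (fun s => phi s z) t0) a (b t0)).
  2:{ apply RInt_ext. intros z _. apply is_derive_unique, is_derive_Reals, Hd. }
  apply (is_derive_RInt_param_bound_comp_aux3 phi a b t0 db).
  - apply filter_forall. intro; apply Hint.
  - exists (mkposreal 1 Rlt_0_1). apply filter_forall. intro; apply Hint.
  - apply is_derive_Reals, Hb.
  - exists (mkposreal 1 Rlt_0_1). apply filter_forall. intros; apply Hex_derive.
  - intros; apply Hcont_derive.
  - exists (mkposreal 1 Rlt_0_1). intros; apply Hcont_derive.
  - apply continuity_2d_pt_snd, Hphi.
Qed.

(* Moving coordinate [c] of a point moves its
   integration path (and its shift) along coordinate [char_coord c], at rate
   [char_rate eps c]: the u-direction acts on x^3 through x^3 - eps u. *)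

Definition char_coord (c : nat) : nat := if Nat.eqb c 1 then 3%nat else c.
Definition char_rate (eps : R) (c : nat) : R := if Nat.eqb c 1 then - eps else 1.

Ltac coord_cases :=
  cbv beta delta [shift path upd char_coord char_rate kdelta];
  repeat match goal with
         | |- context [Nat.eqb ?x ?y] => destruct (Nat.eqb_spec x y)
         | _ : context [Nat.eqb ?x ?y] |- _ => destruct (Nat.eqb_spec x y)
         end;
  intros; subst; try lia; try reflexivity; try ring.

Lemma path_upd (eps : R) (p : Point) (c : nat) (t z : R) :
  path eps (upd p c t) z =
  upd (path eps p z) (char_coord c) (path eps p z (char_coord c) + char_rate eps c * (t - p c)).
Proof. apply functional_extensionality. intro j. coord_cases. Qed.

Lemma path_base (eps : R) (p : Point) : path eps p (p 1%nat) = p.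
Proof. apply functional_extensionality. intro j. coord_cases. Qed.

Lemma path_upd_affine (eps : R) (p : Point) (c : nat) :
  exists A B C : Point, forall t z, path eps (upd p c t) z = (fun i => A i + t * B i + z * C i).
Proof.
  set (B := fun i => if Nat.eqb i (char_coord c) then char_rate eps c else 0).
  exists (fun i => path eps p 0 i - p c * B i), B, (fun i => kdelta i 1 + eps * kdelta i 3).
  intros t z. apply functional_extensionality. intro j. unfold B. coord_cases.
Qed.

Lemma has_pd_on_path (F : Point -> R) (eps : R) (p : Point) (c : nat) (z d : R) :
  has_pd F (char_coord c) (path eps p z) d ->
  derivable_pt_lim (fun t => F (path eps (upd p c t) z)) (p c) (char_rate eps c * d).
Proof.
  apply has_pd_reparam. intro t. now rewrite path_upd.
Qed.

Lemma has_pd_shifted (N : nat) (G : Point -> R) (eps : R) (p : Point) (c : nat) (d : R) :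
  depends_only_on (fun j => (3 <= j <= N)%nat) G ->
  has_pd G (char_coord c) (shift eps p) d ->
  has_pd (fun q => G (shift eps q)) c p (char_rate eps c * d).
Proof.
  intros HG Hd.
  assert (Hk : char_coord c <> 1%nat) by coord_cases.
  assert (Hline : forall s, G (upd (path eps p 0) (char_coord c) s) =
                            G (upd (shift eps p) (char_coord c) s)).
  { intro s. apply HG. intros i Hi. revert Hk. coord_cases. }
  apply (has_pd_reparam G (fun t => shift eps (upd p c t)) (path eps p 0) (char_coord c)).
  - intro t. rewrite <- path_upd. apply HG. intros i Hi. coord_cases.
  - assert (Hpt : path eps p 0 (char_coord c) = shift eps p (char_coord c))
      by (revert Hk; coord_cases).
    unfold has_pd. rewrite Hpt.
    rewrite (functional_extensionality _ _ Hline). exact Hd.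
Qed.

(* Differentiation of [q |-> int_{u0}^{u(q)} L(path q z) dz] in any coordinate
   direction [c]: the integrand moves along coordinate [char_coord c], and the
   upper limit moves only when [c] is the u-coordinate. *)
Lemma has_pd_path_integral (N : nat) (eps u0 : R) (L DL : Point -> R) (c : nat) (p : Point) :
  contN N L -> contN N DL -> (forall q, has_pd L (char_coord c) q (DL q)) ->
  has_pd (fun q => RInt (fun z => L (path eps q z)) u0 (q 1%nat)) c p
    (char_rate eps c * RInt (fun z => DL (path eps p z)) u0 (p 1%nat) + L p * kdelta c 1).
Proof.
  intros HL HDL HD.
  destruct (path_upd_affine eps p c) as [A [B [C Hplane]]].
  assert (Hcont : forall D, contN N D -> forall t z,
             continuity_2d_pt (fun t z => D (path eps (upd p c t) z)) t z).
  { intros D HD' t z. eapply continuity_2d_pt_ext; [|apply (continuity_2d_affine N D A B C t z HD')].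
    intros t' z'. now rewrite Hplane. }
  assert (Hbound : derivable_pt_lim (fun t => upd p c t 1%nat) (p c) (kdelta c 1)).
  { unfold kdelta, upd. destruct (Nat.eqb_spec 1 c), (Nat.eqb_spec c 1); try lia.
    - apply derivable_pt_lim_id.
    - apply derivable_pt_lim_const. }
  assert (Hint : ex_RInt (fun z => DL (path eps p z)) u0 (p 1%nat)).
  { apply (@ex_RInt_continuous R_CompleteNormedModule). intros z _.
    apply continuity_pt_filterlim.
    replace (fun z => DL (path eps p z)) with (fun z => DL (path eps (upd p c (p c)) z))
      by now rewrite upd_self.
    apply (continuity_2d_pt_snd (fun t z => DL (path eps (upd p c t) z))), Hcont, HDL. }
  pose proof (leibniz_rule (fun t z => L (path eps (upd p c t) z))
                (fun t z => char_rate eps c * DL (path eps (upd p c t) z))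
                (fun t => upd p c t 1%nat) u0 (p c) (kdelta c 1)) as Hleib.
  cbv beta in Hleib. rewrite upd_self, path_base in Hleib.
  replace (RInt (fun z => char_rate eps c * DL (path eps p z)) u0 (p 1%nat))
    with (char_rate eps c * RInt (fun z => DL (path eps p z)) u0 (p 1%nat)) in Hleib
    by (symmetry; exact (RInt_scal _ _ _ _ Hint)).
  apply Hleib; [|apply Hcont, HL| |exact Hbound].
  - intros t z. pose proof (has_pd_on_path L eps (upd p c t) c z _ (HD _)) as Hd.
    rewrite upd_same in Hd.
    replace (fun s => L (path eps (upd (upd p c t) c s) z))
      with (fun s => L (path eps (upd p c s) z)) in Hd
      by (apply functional_extensionality; intro s; now rewrite upd_upd).
    exact Hd.
  - intros t z. apply continuity_2d_pt_mult; [apply continuity_2d_pt_const|].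
    apply Hcont, HDL.
Qed.

(* This is the only information about the metric the Killing equation needs. *)
Definition transport_rate (eps : R) (G : Point -> R) (p : Point) (l : R) : Prop :=
  exists d1 d3, has_pd G 1 p d1 /\ has_pd G 2 p 0 /\ has_pd G 3 p d3 /\ d1 + eps * d3 = l.

Lemma transport_ext (eps : R) (F G : Point -> R) (p : Point) (l : R) :
  (forall q, F q = G q) -> transport_rate eps F p l -> transport_rate eps G p l.
Proof.
  intros HFG [d1 [d3 [H1 [H2 [H3 Hl]]]]].
  exists d1, d3. repeat split; try (eapply has_pd_ext; eassumption). exact Hl.
Qed.

Lemma transport_lin (eps k : R) (A B : Point -> R) (p : Point) (la lb : R) :
  transport_rate eps A p la -> transport_rate eps B p lb ->
  transport_rate eps (fun q => A q + k * B q) p (la + k * lb).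
Proof.
  intros [a1 [a3 [A1 [A2 [A3 Ha]]]]] [b1 [b3 [B1 [B2 [B3 Hb]]]]].
  exists (a1 + k * b1), (a3 + k * b3).
  repeat split; try (apply has_pd_plus; [|apply has_pd_scal]; assumption).
  - apply (has_pd_value _ _ _ (0 + k * 0)); [|ring].
    apply has_pd_plus; [|apply has_pd_scal]; assumption.
  - rewrite <- Ha, <- Hb. ring.
Qed.

Lemma all_pd_lin (N : nat) (k : R) (A B : Point -> R) (p : Point) :
  all_pd N A p -> all_pd N B p -> all_pd N (fun q => A q + k * B q) p.
Proof.
  intros HA HB c Hc. destruct (HA c Hc) as [a Ha], (HB c Hc) as [b Hb].
  exists (a + k * b). apply has_pd_plus; [|apply has_pd_scal]; assumption.
Qed.

Lemma all_pd_ext (N : nat) (F G : Point -> R) (p : Point) :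
  (forall q, F q = G q) -> all_pd N F p -> all_pd N G p.
Proof.
  intros HFG HF c Hc. destruct (HF c Hc) as [d Hd]. exists d. eapply has_pd_ext; eassumption.
Qed.

Lemma transport_shifted (N : nat) (G : Point -> R) (eps : R) (p : Point) (d : R) :
  depends_only_on (fun j => (3 <= j <= N)%nat) G -> has_pd G 3 (shift eps p) d ->
  transport_rate eps (fun q => G (shift eps q)) p 0.
Proof.
  intros HG Hd.
  exists (- eps * d), (1 * d). repeat split.
  - exact (has_pd_shifted N G eps p 1 d HG Hd).
  - apply (has_pd_value _ _ _ (1 * 0)); [|ring]. apply (has_pd_shifted N G eps p 2 0 HG).
    apply (has_pd_indep _ G 2 (shift eps p) HG). lia.
  - exact (has_pd_shifted N G eps p 3 d HG Hd).
  - ring.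
Qed.

Lemma all_pd_shifted (N : nat) (G : Point -> R) (eps : R) (p : Point) :
  (3 <= N)%nat -> depends_only_on (fun j => (3 <= j <= N)%nat) G ->
  all_pd N G (shift eps p) -> all_pd N (fun q => G (shift eps q)) p.
Proof.
  intros HN HG HGp c Hc.
  destruct (HGp (char_coord c)) as [d Hd]; [unfold char_coord; destruct (Nat.eqb_spec c 1); lia|].
  exists (char_rate eps c * d). exact (has_pd_shifted N G eps p c d HG Hd).
Qed.

(* The integral along the characteristics through [p] is transported at rate
   given by the integrand: the boundary term of d_u survives, while the
   interior contributions of d_u and eps d_3 cancel. *)
Lemma transport_path_integral (N : nat) (eps u0 : R) (L : Point -> R) (p : Point) :
  (3 <= N)%nat -> smoothN N L -> (forall q t, L (upd q 2 t) = L q) ->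
  transport_rate eps (fun q => RInt (fun z => L (path eps q z)) u0 (q 1%nat)) p (L p).
Proof.
  intros HN HL HL2.
  destruct (smooth_has_pd N L 3 HL ltac:(lia)) as [DL3 [HD3 SD3]].
  set (I3 := RInt (fun z => DL3 (path eps p z)) u0 (p 1%nat)).
  exists (- eps * I3 + L p * 1), (1 * I3 + L p * 0). repeat split.
  - exact (has_pd_path_integral N eps u0 L DL3 1 p (smooth_cont N L HL) (smooth_cont N DL3 SD3) HD3).
  - apply has_pd_const. intro t. cbv beta. rewrite upd_other by lia. f_equal.
    apply functional_extensionality. intro z. rewrite path_upd. apply HL2.
  - exact (has_pd_path_integral N eps u0 L DL3 3 p (smooth_cont N L HL) (smooth_cont N DL3 SD3) HD3).
  - ring.
Qed.

Lemma all_pd_path_integral (N : nat) (eps u0 : R) (L : Point -> R) (p : Point) :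
  (3 <= N)%nat -> smoothN N L ->
  all_pd N (fun q => RInt (fun z => L (path eps q z)) u0 (q 1%nat)) p.
Proof.
  intros HN HL c Hc.
  destruct (smooth_has_pd N L (char_coord c) HL) as [D [HD SD]];
    [unfold char_coord; destruct (Nat.eqb_spec c 1); lia|].
  eexists. exact (has_pd_path_integral N eps u0 L D c p (smooth_cont N L HL) (smooth_cont N D SD) HD).
Qed.

Definition killing_field (eps : R) (Y : Point -> R) (q : Point) (c : nat) : R :=
  if Nat.eqb c 1 then 1 else if Nat.eqb c 2 then Y q else if Nat.eqb c 3 then eps else 0.

Ltac gmet_cases :=
  unfold gmet;
  repeat match goal with
         | |- context [Nat.eqb ?x ?y] => destruct (Nat.eqb_spec x y)
         | |- context [Nat.leb ?x ?y] => destruct (Nat.leb_spec0 x y)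
         end;
  simpl; try lia; try reflexivity.

Lemma gmet_row2 (N : nat) (H : Point -> R) (W : nat -> Point -> R)
    (m : nat -> nat -> Point -> R) (b : nat) (q : Point) :
  (1 <= b <= N)%nat ->
  gmet N H W m 2 b q = kdelta b 1 /\ gmet N H W m b 2 q = kdelta b 1.
Proof. intro Hb. unfold kdelta. split; gmet_cases. Qed.

Lemma fold_sum_zero (F : nat -> R) (l : list nat) :
  (forall j, In j l -> F j = 0) -> fold_right Rplus 0 (map F l) = 0.
Proof.
  induction l as [|j l IHl]; intro HF; simpl; [reflexivity|].
  rewrite HF, IHl; [ring| |now left].
  intros i Hi. apply HF. now right.
Qed.

Lemma sumN_first3 (N : nat) (F : nat -> R) :
  (3 <= N)%nat -> (forall c, (4 <= c <= N)%nat -> F c = 0) ->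
  sumN N F = F 1%nat + F 2%nat + F 3%nat.
Proof.
  intros HN HF. unfold sumN. replace N with (3 + (N - 3))%nat by lia. simpl.
  rewrite fold_sum_zero; [ring|]. intros j Hj. apply in_seq in Hj. apply HF. lia.
Qed.

Lemma has_pd_Derive (F : Point -> R) (c : nat) (p : Point) (d : R) :
  has_pd F c p d -> has_pd F c p (Derive (fun t => F (upd p c t)) (p c)).
Proof.
  intro Hd. replace (Derive _ _) with d; [exact Hd|].
  symmetry. apply is_derive_unique, is_derive_Reals, Hd.
Qed.

Lemma has_pd_killing_field (eps : R) (Y : Point -> R) (a c : nat) (p : Point) (dy : R) :
  has_pd Y a p dy ->
  has_pd (fun q => killing_field eps Y q c) a p (if Nat.eqb c 2 then dy else 0).
Proof.
  intro Hdy. unfold killing_field.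
  destruct (Nat.eqb_spec c 1); [subst; now apply has_pd_const|].
  destruct (Nat.eqb_spec c 2); [exact Hdy|]. now apply has_pd_const.
Qed.

Definition reduced_killing (N : nat) (eps : R) (Y G : Point -> R) (p : Point) (a b : nat) : Prop :=
  all_pd N G p /\
  exists l, transport_rate eps G p l /\
    forall dya dyb, has_pd Y a p dya -> has_pd Y b p dyb ->
      l + kdelta b 1 * dya + kdelta a 1 * dyb = 0.

(* Since g(d_v, .) = du, the Killing equation (L_X g)_ab = 0 for
   X = d_u + Y d_v + eps d_3 reads: transport rate of g_ab
   + delta_b1 d_a Y + delta_a1 d_b Y = 0. *)
Lemma killing_reduction (N : nat) (eps : R) (H : Point -> R) (W : nat -> Point -> R)
    (m : nat -> nat -> Point -> R) (Y : Point -> R) :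
  (3 <= N)%nat ->
  (forall p, all_pd N Y p) ->
  (forall p a b, (1 <= a <= N)%nat -> (1 <= b <= N)%nat ->
     reduced_killing N eps Y (gmet N H W m a b) p a b) ->
  killing N (gmet N H W m) (killing_field eps Y).
Proof.
  intros HN HY Hg p a b Ha Hb.
  set (g := gmet N H W m a b).
  destruct (Hg p a b Ha Hb) as [Hall [l [[d1 [d3 [G1 [G2 [G3 Hl]]]]] Hsum]]].
  destruct (HY p a Ha) as [dya Hya], (HY p b Hb) as [dyb Hyb].
  set (Dg := fun c => Derive (fun t => g (upd p c t)) (p c)).
  exists Dg, (fun c => if Nat.eqb c 2 then dya else 0), (fun c => if Nat.eqb c 2 then dyb else 0).
  split.
  - intros c Hc. destruct (Hall c Hc) as [d Hd].
    split; [exact (has_pd_Derive g c p d Hd)|].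
    split; apply has_pd_killing_field; assumption.
  - rewrite sumN_first3 by (auto; intros c Hc; unfold killing_field;
      destruct (Nat.eqb_spec c 1), (Nat.eqb_spec c 2), (Nat.eqb_spec c 3); try lia; ring).
    destruct (gmet_row2 N H W m b p Hb) as [Hb2 _], (gmet_row2 N H W m a p Ha) as [_ Ha2].
    unfold Dg, killing_field. simpl. rewrite Hb2, Ha2.
    rewrite (has_pd_unique g 1 p _ d1 (has_pd_Derive g 1 p d1 G1) G1),
            (has_pd_unique g 2 p _ 0 (has_pd_Derive g 2 p 0 G2) G2),
            (has_pd_unique g 3 p _ d3 (has_pd_Derive g 3 p d3 G3) G3).
    pose proof (Hsum dya dyb Hya Hyb). lra.
Qed.

Lemma all_pd_mult (N : nat) (A B : Point -> R) (p : Point) :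
  all_pd N A p -> all_pd N B p -> all_pd N (fun q => A q * B q) p.
Proof.
  intros HA HB c Hc. destruct (HA c Hc) as [a Ha], (HB c Hc) as [b Hb].
  eexists. exact (has_pd_mult A B c p a b Ha Hb).
Qed.

Lemma all_pd_fold_sum (N : nat) (F : nat -> Point -> R) (l : list nat) (p : Point) :
  (forall i, In i l -> all_pd N (F i) p) ->
  all_pd N (fun q => fold_right Rplus 0 (map (fun i => F i q) l)) p.
Proof.
  induction l as [|i l IHl]; intros HF c Hc; simpl.
  - exists 0. now apply has_pd_const.
  - destruct (HF i (or_introl eq_refl) c Hc) as [a Ha].
    destruct (IHl (fun j Hj => HF j (or_intror Hj)) c Hc) as [b Hb].
    exists (a + b). exact (has_pd_plus _ _ c p a b Ha Hb).
Qed.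

Lemma gmet_uu (N : nat) (H : Point -> R) (W : nat -> Point -> R)
    (m : nat -> nat -> Point -> R) (q : Point) :
  gmet N H W m 1 1 q = 2 * H q.
Proof. gmet_cases. Qed.

Lemma gmet_ue (N : nat) (H : Point -> R) (W : nat -> Point -> R)
    (m : nat -> nat -> Point -> R) (e : nat) (q : Point) :
  (3 <= e <= N)%nat -> gmet N H W m 1 e q = W e q /\ gmet N H W m e 1 q = W e q.
Proof. intro He. split; gmet_cases. Qed.

Lemma gmet_ef (N : nat) (H : Point -> R) (W : nat -> Point -> R)
    (m : nat -> nat -> Point -> R) (e e' : nat) (q : Point) :
  (3 <= e <= N)%nat -> (3 <= e' <= N)%nat ->
  gmet N H W m e e' q = fold_right Rplus 0 (map (fun i => m i e q * m i e' q) (seq 3 (N - 2))).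
Proof. intros He He'. gmet_cases. Qed.

Lemma gform_killing_field (N : nat) (eps : R) (H Y : Point -> R) (W : nat -> Point -> R)
    (m : nat -> nat -> Point -> R) (q : Point) :
  (3 <= N)%nat ->
  gform N (gmet N H W m) q (killing_field eps Y q) (killing_field eps Y q) =
  2 * H q + 2 * Y q + 2 * eps * W 3%nat q + eps ^ 2 * gmet N H W m 3 3 q.
Proof.
  intro HN.
  assert (Hvanish : forall c, (4 <= c <= N)%nat -> killing_field eps Y q c = 0).
  { intros c Hc. unfold killing_field.
    destruct (Nat.eqb_spec c 1), (Nat.eqb_spec c 2), (Nat.eqb_spec c 3); lia || reflexivity. }
  unfold gform. rewrite sumN_first3 by (auto; intros c Hc; unfold sumN;
    apply fold_sum_zero; intros; rewrite (Hvanish c) by lia; ring).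
  rewrite !sumN_first3 by (auto; intros c Hc; rewrite (Hvanish c) by lia; ring).
  destruct (gmet_ue N H W m 3 q) as [Hu3 H3u]; [lia|].
  destruct (gmet_row2 N H W m 1 q) as [H21 H12]; [lia|].
  destruct (gmet_row2 N H W m 2 q) as [H22 _]; [lia|].
  destruct (gmet_row2 N H W m 3 q) as [H23 H32]; [lia|].
  unfold killing_field; simpl.
  rewrite gmet_uu, Hu3, H3u, H21, H12, H22, H23, H32. unfold kdelta. simpl. ring.
Qed.

Lemma const_entry (N : nat) (eps k : R) (Y G : Point -> R) (p : Point) (a b : nat) :
  (forall q, G q = k) ->
  (forall dya dyb, has_pd Y a p dya -> has_pd Y b p dyb ->
     kdelta b 1 * dya + kdelta a 1 * dyb = 0) ->
  reduced_killing N eps Y G p a b.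
Proof.
  intros HG HY.
  assert (Hc : forall c, has_pd G c p 0) by (intro c; apply has_pd_const; intro t; now rewrite !HG).
  split; [intros c _; now exists 0|]. exists 0. split; [exists 0, 0; repeat split; auto; ring|].
  intros dya dyb Hya Hyb. pose proof (HY dya dyb Hya Hyb). lra.
Qed.

Lemma reduced_killing_ext (N : nat) (eps : R) (Y F G : Point -> R) (p : Point) (a b : nat) :
  (forall q, F q = G q) -> reduced_killing N eps Y F p a b -> reduced_killing N eps Y G p a b.
Proof.
  intros HFG [Hall [l [Hl Hid]]]. split; [exact (all_pd_ext N F G p HFG Hall)|].
  exists l. split; [exact (transport_ext eps F G p l HFG Hl)|exact Hid].
Qed.

Definition shifted_frame (eps : R) (mt : nat -> nat -> Point -> R) : nat -> nat -> Point -> R :=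
  fun i e q => mt i e (shift eps q).

Definition v_component (eps : R) (H Phi f : Point -> R) (q : Point) : R :=
  - (H q + eps * Phi q + f q).

Lemma has_pd_v_component (eps : R) (H Phi f : Point -> R) (c : nat) (p : Point) (h ph fh : R) :
  has_pd H c p h -> has_pd Phi c p ph -> has_pd f c p fh ->
  has_pd (v_component eps H Phi f) c p (- (h + eps * ph + fh)).
Proof.
  intros Hh Hph Hfh.
  apply (has_pd_ext (fun q => -1 * ((H q + eps * Phi q) + 1 * f q)));
    [intro q; unfold v_component; ring|].
  apply (has_pd_value _ _ _ (-1 * ((h + eps * ph) + 1 * fh))); [|ring].
  apply has_pd_scal, has_pd_plus; [apply has_pd_plus|apply has_pd_scal]; auto.
  now apply has_pd_scal.
Qed.

Section KillingVector.

Variables (N : nat) (eps : R) (mt : nat -> nat -> Point -> R) (H F2t f Phi : Point -> R)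
  (Et : nat -> Point -> R) (u0 : R) (W : nat -> Point -> R) (dH dPhi df : nat -> Point -> R).

Hypothesis HN : (3 <= N)%nat.
Hypothesis Heps : eps <> 0.
Hypothesis Hmt_dep : forall i e, (3 <= i <= N)%nat -> (3 <= e <= N)%nat ->
  depends_only_on (fun j => (3 <= j <= N)%nat) (mt i e).
Hypothesis Hmt_smooth : forall i e, (3 <= i)%nat -> (i <= e)%nat -> (e <= N)%nat ->
  smoothN N (mt i e).
Hypothesis Hmt_zero : forall i e, (3 <= e)%nat -> (e < i)%nat -> (i <= N)%nat ->
  forall y, mt i e y = 0.
Hypothesis Hmt_pos : forall i, (3 <= i <= N)%nat -> forall y, 0 < mt i i y.
Hypothesis HH_dep : depends_only_on (fun j => j = 1%nat \/ (3 <= j <= N)%nat) H.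
Hypothesis HH_smooth : smoothN N H.
Hypothesis HF2_dep : depends_only_on (fun j => (3 <= j <= N)%nat) F2t.
Hypothesis HF2_smooth : smoothN N F2t.
Hypothesis HE_dep : forall n, (4 <= n <= N)%nat ->
  depends_only_on (fun j => (3 <= j <= N)%nat) (Et n).
Hypothesis HE_smooth : forall n, (4 <= n <= N)%nat -> smoothN N (Et n).
Hypothesis Hf_dep : depends_only_on (fun j => (3 <= j <= N)%nat) f.
Hypothesis Hf_smooth : smoothN N f.
Hypothesis HPhi_dep : depends_only_on (fun j => j = 1%nat \/ (3 <= j <= N)%nat) Phi.
Hypothesis HPhi_smooth : smoothN N Phi.
Hypothesis HPhi_u : forall p, exists d, has_pd Phi 1 p d /\ has_pd H 3 p d.
Hypothesis HdH : forall n p, (4 <= n <= N)%nat -> has_pd H n p (dH n p).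
Hypothesis HdPhi : forall n p, (4 <= n <= N)%nat -> has_pd Phi n p (dPhi n p).
Hypothesis Hdf : forall n p, (4 <= n <= N)%nat -> has_pd f n p (df n p).
Hypothesis HW3 : forall p, W 3%nat p = Phi p + / eps * (F2t (shift eps p) + f p).
Hypothesis HWn : forall n p, (4 <= n <= N)%nat ->
  exists pr : Riemann_integrable
                (fun z => dH n (path eps p z) + eps * dPhi n (path eps p z)
                          + df n (path eps p z)) u0 (p 1%nat),
    W n p = RiemannInt pr + Et n (shift eps p).

Let Y := v_component eps H Phi f.
Let g := gmet N H W (shifted_frame eps mt).

Lemma v_component_all_pd (p : Point) : all_pd N Y p.
Proof.
  intros c Hc.
  destruct (smooth_all_pd N H p HH_smooth c Hc) as [h Hh].
  destruct (smooth_all_pd N Phi p HPhi_smooth c Hc) as [ph Hph].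
  destruct (smooth_all_pd N f p Hf_smooth c Hc) as [fh Hfh].
  eexists. exact (has_pd_v_component eps H Phi f c p h ph fh Hh Hph Hfh).
Qed.

Lemma v_component_pd_v (p : Point) : has_pd Y 2 p 0.
Proof.
  apply (has_pd_value _ _ _ (- (0 + eps * 0 + 0))); [|ring].
  apply has_pd_v_component;
    [apply (has_pd_indep _ H 2 p HH_dep)|apply (has_pd_indep _ Phi 2 p HPhi_dep)
    |apply (has_pd_indep _ f 2 p Hf_dep)]; lia.
Qed.

(* g_uu = 2H: its transport rate 2 (d_u H + eps d_3 H) is cancelled by 2 d_u Y,
   because d_u Phi = d_3 H. *)
Lemma uu_entry (p : Point) : reduced_killing N eps Y (g 1 1) p 1 1.
Proof.
  assert (Hg : forall c h, has_pd H c p h -> has_pd (g 1 1) c p (2 * h)).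
  { intros c h Hh. apply (has_pd_ext (fun q => 2 * H q)); [intro q; unfold g; now rewrite gmet_uu|].
    now apply has_pd_scal. }
  split.
  { intros c Hc. destruct (smooth_all_pd N H p HH_smooth c Hc) as [h Hh].
    exists (2 * h). exact (Hg c h Hh). }
  destruct (HPhi_u p) as [d [HPhi1 HH3]].
  destruct (smooth_all_pd N H p HH_smooth 1%nat) as [h1 Hh1]; [lia|].
  exists (2 * h1 + eps * (2 * d)). split.
  - exists (2 * h1), (2 * d). repeat split; try (apply Hg; assumption).
    apply (has_pd_value _ _ _ (2 * 0)); [|ring]. apply Hg, (has_pd_indep _ H 2 p HH_dep). lia.
  - intros dya dyb Hya Hyb.
    assert (Hf1 : has_pd f 1 p 0) by (apply (has_pd_indep _ f 1 p Hf_dep); lia).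
    pose proof (has_pd_v_component eps H Phi f 1 p _ _ _ Hh1 HPhi1 Hf1) as HY1.
    rewrite (has_pd_unique Y 1 p dya _ Hya HY1), (has_pd_unique Y 1 p dyb _ Hyb HY1).
    unfold kdelta. simpl. ring.
Qed.

(* W_3 = Phi + (F_2 + f)/eps is transported at rate
   d_u Phi + eps d_3 Phi + d_3 f = d_3 (H + eps Phi + f). *)
Lemma W3_entry (p : Point) :
  all_pd N (W 3%nat) p /\
  exists l, transport_rate eps (W 3%nat) p l /\ forall dy, has_pd Y 3 p dy -> l + dy = 0.
Proof.
  assert (HW3' : forall q, Phi q + / eps * (F2t (shift eps q) + 1 * f q) = W 3%nat q)
    by (intro q; rewrite HW3; ring).
  split.
  { apply (all_pd_ext N _ _ p HW3'), all_pd_lin; [now apply smooth_all_pd|].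
    apply all_pd_lin; [|now apply smooth_all_pd].
    apply all_pd_shifted; [exact HN|exact HF2_dep|now apply smooth_all_pd]. }
  destruct (HPhi_u p) as [d [HPhi1 HH3]].
  destruct (smooth_all_pd N Phi p HPhi_smooth 3%nat) as [ph3 Hph3]; [lia|].
  destruct (smooth_all_pd N f p Hf_smooth 3%nat) as [f3 Hf3]; [lia|].
  destruct (smooth_all_pd N F2t (shift eps p) HF2_smooth 3%nat) as [F3 HF3]; [lia|].
  exists (d + eps * ph3 + / eps * (0 + 1 * (0 + eps * f3))). split.
  - apply (transport_ext eps _ _ p _ HW3'), transport_lin; [|apply transport_lin].
    + exists d, ph3. repeat split; [exact HPhi1| |exact Hph3].
      apply (has_pd_indep _ Phi 2 p HPhi_dep). lia.
    + exact (transport_shifted N F2t eps p F3 HF2_dep HF3).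
    + exists 0, f3. repeat split; [| |exact Hf3]; apply (has_pd_indep _ f _ p Hf_dep); lia.
  - intros dy Hdy.
    rewrite (has_pd_unique Y 3 p dy _ Hdy (has_pd_v_component eps H Phi f 3 p _ _ _ HH3 Hph3 Hf3)).
    field. exact Heps.
Qed.

(* W_n (n >= 4) is the integral of L_n = d_n(H + eps Phi + f) along the characteristics,
   corrected by a function of (x^3 - eps u, x^4, ..., x^N); it is transported at rate L_n. *)
Lemma Wn_entry (n : nat) (p : Point) :
  (4 <= n <= N)%nat ->
  all_pd N (W n) p /\
  exists l, transport_rate eps (W n) p l /\ forall dy, has_pd Y n p dy -> l + dy = 0.
Proof.
  intro Hn.
  set (L := fun q => dH n q + eps * dPhi n q + df n q).
  assert (HL : smoothN N L).
  { replace L with (fun q => (dH n q + eps * dPhi n q) + 1 * df n q)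
      by (apply functional_extensionality; intro; unfold L; ring).
    apply smooth_lin; [apply smooth_lin|].
    - exact (smooth_deriv N H (dH n) n HH_smooth ltac:(lia) (fun q => HdH n q Hn)).
    - exact (smooth_deriv N Phi (dPhi n) n HPhi_smooth ltac:(lia) (fun q => HdPhi n q Hn)).
    - exact (smooth_deriv N f (df n) n Hf_smooth ltac:(lia) (fun q => Hdf n q Hn)). }
  assert (HL2 : forall q t, L (upd q 2 t) = L q).
  { intros q t.
    set (S := fun j => j = 1%nat \/ (3 <= j <= N)%nat).
    assert (Hv : forall D, depends_only_on S D -> D (upd q 2 t) = D q).
    { intros D HD. apply (depends_upd S D 2 q t HD). unfold S. lia. }
    assert (Hn' : S n) by (unfold S; lia).
    assert (Hf_dep' : depends_only_on S f)
      by (apply (depends_only_on_weaken (fun j => (3 <= j <= N)%nat) S f); [unfold S; lia|exact Hf_dep]).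
    unfold L.
    rewrite (Hv _ (has_pd_depends S H (dH n) n HH_dep Hn' (fun q => HdH n q Hn))),
      (Hv _ (has_pd_depends S Phi (dPhi n) n HPhi_dep Hn' (fun q => HdPhi n q Hn))),
      (Hv _ (has_pd_depends S f (df n) n Hf_dep' Hn' (fun q => Hdf n q Hn))).
    reflexivity. }
  assert (HWn' : forall q, RInt (fun z => L (path eps q z)) u0 (q 1%nat) + 1 * Et n (shift eps q)
                          = W n q).
  { intro q. destruct (HWn n q Hn) as [pr Hpr].
    rewrite Hpr, <- (RInt_Reals _ _ _ pr). unfold L. ring. }
  split.
  - apply (all_pd_ext N _ _ p HWn'), all_pd_lin; [now apply all_pd_path_integral|].
    apply all_pd_shifted; [exact HN|now apply HE_dep|now apply smooth_all_pd, HE_smooth].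
  - destruct (smooth_all_pd N (Et n) (shift eps p) (HE_smooth n Hn) 3%nat) as [e3 He3]; [lia|].
    exists (L p + 1 * 0). split.
    + apply (transport_ext eps _ _ p _ HWn'), transport_lin.
      * exact (transport_path_integral N eps u0 L p HN HL HL2).
      * exact (transport_shifted N (Et n) eps p e3 (HE_dep n Hn) He3).
    + intros dy Hdy.
      rewrite (has_pd_unique Y n p dy _ Hdy (has_pd_v_component eps H Phi f n p _ _ _
                 (HdH n p Hn) (HdPhi n p Hn) (Hdf n p Hn))).
      unfold L. ring.
Qed.

Lemma W_entry (e : nat) (p : Point) :
  (3 <= e <= N)%nat ->
  all_pd N (W e) p /\
  exists l, transport_rate eps (W e) p l /\ forall dy, has_pd Y e p dy -> l + dy = 0.
Proof.
  intro He. destruct (Nat.eq_dec e 3) as [->|He3]; [exact (W3_entry p)|].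
  apply Wn_entry. lia.
Qed.

Lemma frame_all_pd (i e : nat) (y : Point) :
  (3 <= i <= N)%nat -> (3 <= e <= N)%nat -> all_pd N (mt i e) y.
Proof.
  intros Hi He. destruct (le_lt_dec i e) as [Hie|Hei].
  - apply smooth_all_pd, Hmt_smooth; lia.
  - intros c _. exists 0. apply has_pd_const. intro t. rewrite !(Hmt_zero i e); lia || reflexivity.
Qed.

(* g_ef = sum_i m^i_e m^i_f is a function of (x^3 - eps u, x^4, ..., x^N). *)
Lemma frame_entry (a b : nat) (p : Point) :
  (3 <= a <= N)%nat -> (3 <= b <= N)%nat -> reduced_killing N eps Y (g a b) p a b.
Proof.
  intros Ha Hb.
  set (G := fun y => fold_right Rplus 0 (map (fun i => mt i a y * mt i b y) (seq 3 (N - 2)))).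
  assert (HG : forall q, G (shift eps q) = g a b q) by (intro q; unfold g; now rewrite gmet_ef).
  assert (HGdep : depends_only_on (fun j => (3 <= j <= N)%nat) G).
  { intros y y' Hyy'. unfold G. f_equal. apply map_ext_in. intros i Hi. apply in_seq in Hi.
    rewrite (Hmt_dep i a ltac:(lia) Ha y y' Hyy'), (Hmt_dep i b ltac:(lia) Hb y y' Hyy').
    reflexivity. }
  assert (HGpd : forall y, all_pd N G y).
  { intro y. apply all_pd_fold_sum. intros i Hi. apply in_seq in Hi.
    apply all_pd_mult; apply frame_all_pd; lia. }
  split; [apply (all_pd_ext N _ _ p HG), all_pd_shifted; auto|].
  destruct (HGpd (shift eps p) 3%nat) as [d Hd]; [lia|].
  exists 0. split; [exact (transport_ext eps _ _ p 0 HG (transport_shifted N G eps p d HGdep Hd))|].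
  intros dya dyb _ _. unfold kdelta.
  destruct (Nat.eqb_spec a 1), (Nat.eqb_spec b 1); try lia. ring.
Qed.

Lemma metric_entries (p : Point) (a b : nat) :
  (1 <= a <= N)%nat -> (1 <= b <= N)%nat -> reduced_killing N eps Y (g a b) p a b.
Proof.
  intros Ha Hb.
  assert (Hvert : forall dy, has_pd Y 2 p dy -> dy = 0)
    by (intros dy Hdy; exact (has_pd_unique Y 2 p _ _ Hdy (v_component_pd_v p))).
  assert (Hk : forall e, (3 <= e)%nat -> kdelta e 1 = 0)
    by (intros e He; unfold kdelta; destruct (Nat.eqb_spec e 1); [lia|reflexivity]).
  assert (HW : forall e q, (3 <= e <= N)%nat -> W e q = g 1 e q /\ W e q = g e 1 q)
    by (intros e q He; destruct (gmet_ue N H W (shifted_frame eps mt) e q He); auto).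
  assert (Ha' : a = 1%nat \/ a = 2%nat \/ (3 <= a <= N)%nat) by lia.
  assert (Hb' : b = 1%nat \/ b = 2%nat \/ (3 <= b <= N)%nat) by lia.
  destruct Ha' as [->|[->|Ha']], Hb' as [->|[->|Hb']].
  - exact (uu_entry p).
  - apply (const_entry N eps 1); [intro q; unfold g; gmet_cases|].
    intros dya dyb _ Hyb. rewrite (Hvert dyb Hyb). unfold kdelta; simpl. ring.
  - apply (reduced_killing_ext N eps Y (W b)); [intro q; apply HW, Hb'|].
    destruct (W_entry b p Hb') as [Hall [l [Hl Hid]]]. split; [exact Hall|].
    exists l. split; [exact Hl|]. intros dya dyb _ Hyb. specialize (Hid dyb Hyb).
    rewrite (Hk b) by lia. unfold kdelta; simpl. lra.
  - apply (const_entry N eps 1); [intro q; unfold g; gmet_cases|].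
    intros dya dyb Hya _. rewrite (Hvert dya Hya). unfold kdelta; simpl. ring.
  - apply (const_entry N eps 0); [intro q; unfold g; gmet_cases|].
    intros. unfold kdelta; simpl. ring.
  - apply (const_entry N eps 0); [intro q; unfold g; gmet_cases|].
    intros. rewrite (Hk b) by lia. unfold kdelta; simpl. ring.
  - apply (reduced_killing_ext N eps Y (W a)); [intro q; apply HW, Ha'|].
    destruct (W_entry a p Ha') as [Hall [l [Hl Hid]]]. split; [exact Hall|].
    exists l. split; [exact Hl|]. intros dya dyb Hya _. specialize (Hid dya Hya).
    rewrite (Hk a) by lia. unfold kdelta; simpl. lra.
  - apply (const_entry N eps 0); [intro q; unfold g; gmet_cases|].
    intros. rewrite (Hk a) by lia. unfold kdelta; simpl. ring.
  - exact (frame_entry a b p Ha' Hb').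
Qed.


Lemma frame_field_eq (q : Point) (c : nat) :
  nvec H q c + F2t (shift eps q) * ellv q c
  + eps * shifted_frame eps mt 3 3 q * m3vec (shifted_frame eps mt 3 3) (W 3%nat) q c
  = killing_field eps Y q c.
Proof.
  assert (Hm33 : 0 < shifted_frame eps mt 3 3 q) by (apply Hmt_pos; lia).
  unfold nvec, ellv, m3vec, killing_field, kdelta. fold (shifted_frame eps mt 3 3 q).
  unfold Y, v_component. rewrite HW3.
  destruct (Nat.eqb_spec c 1), (Nat.eqb_spec c 2), (Nat.eqb_spec c 3);
    try lia; field; lra.
Qed.

(* g(X, X) = 2 F_2 + eps^2 m33^2, using g_33 = m33^2 (the frame is triangular). *)
Lemma frame_field_norm (q : Point) :
  gform N g q (killing_field eps Y q) (killing_field eps Y q) =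
  2 * F2t (shift eps q) + eps ^ 2 * shifted_frame eps mt 3 3 q ^ 2.
Proof.
  unfold g. rewrite (gform_killing_field N eps H Y W _ q HN).
  rewrite (gmet_ef N H W _ 3 3 q) by lia.
  replace (N - 2)%nat with (S (N - 3)) by lia. simpl.
  rewrite fold_sum_zero.
  2:{ intros i Hi. apply in_seq in Hi. unfold shifted_frame.
      rewrite (Hmt_zero i 3); lia || ring. }
  unfold Y, v_component. rewrite HW3. field. exact Heps.
Qed.

End KillingVector.

Theorem mainTheorem5
  (N : nat) (eps : R)
  (* mt i e : the function tilde-m^i_e of (y^3,...,y^N) = (x^3 - eps u, x^4, ..., x^N) *)
  (mt : nat -> nat -> Point -> R)
  (H : Point -> R)                 (* H(u, x^3..x^N) *)
  (F2t : Point -> R)               (* F_2 as a function of (y^3..y^N) *)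
  (Et : nat -> Point -> R)         (* E_n as functions of (y^3..y^N) *)
  (f : Point -> R)                 (* f(x^3..x^N) *)
  (Phi : Point -> R)               (* Phi(u, x^3..x^N) *)
  (u0 : R)
  (W : nat -> Point -> R)          (* W-hat_e *)
  (dH dPhi df : nat -> Point -> R) (* names for the partial derivatives d_n H, d_n Phi, d_n f *)
  (HN : (3 <= N)%nat)
  (Heps : eps <> 0)
  (Hmt_dep : forall i e, (3 <= i <= N)%nat -> (3 <= e <= N)%nat ->
     depends_only_on (fun j => (3 <= j <= N)%nat) (mt i e))
  (Hmt_smooth : forall i e, (3 <= i)%nat -> (i <= e)%nat -> (e <= N)%nat ->
     smoothN N (mt i e))
  (Hmt_zero : forall i e, (3 <= e)%nat -> (e < i)%nat -> (i <= N)%nat ->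
     forall y, mt i e y = 0)
  (Hmt_pos : forall i, (3 <= i <= N)%nat -> forall y, 0 < mt i i y)
  (HH_dep : depends_only_on (fun j => j = 1%nat \/ (3 <= j <= N)%nat) H)
  (HH_smooth : smoothN N H)
  (HF2_dep : depends_only_on (fun j => (3 <= j <= N)%nat) F2t)
  (HF2_smooth : smoothN N F2t)
  (HE_dep : forall n, (4 <= n <= N)%nat ->
     depends_only_on (fun j => (3 <= j <= N)%nat) (Et n))
  (HE_smooth : forall n, (4 <= n <= N)%nat -> smoothN N (Et n))
  (Hf_dep : depends_only_on (fun j => (3 <= j <= N)%nat) f)
  (Hf_smooth : smoothN N f)
  (HPhi_dep : depends_only_on (fun j => j = 1%nat \/ (3 <= j <= N)%nat) Phi)
  (HPhi_smooth : smoothN N Phi)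
  (HPhi_u : forall p, exists d, has_pd Phi 1 p d /\ has_pd H 3 p d)
  (HdH : forall n p, (4 <= n <= N)%nat -> has_pd H n p (dH n p))
  (HdPhi : forall n p, (4 <= n <= N)%nat -> has_pd Phi n p (dPhi n p))
  (Hdf : forall n p, (4 <= n <= N)%nat -> has_pd f n p (df n p))
  (HW3 : forall p, W 3%nat p = Phi p + / eps * (F2t (shift eps p) + f p))
  (HWn : forall n p, (4 <= n <= N)%nat ->
     exists pr : Riemann_integrable
                   (fun z => dH n (path eps p z) + eps * dPhi n (path eps p z)
                             + df n (path eps p z)) u0 (p 1%nat),
       W n p = RiemannInt pr + Et n (shift eps p)) :
  let m := fun i e p => mt i e (shift eps p) in
  let m33 := m 3%nat 3%nat in
  let F2 := fun p => F2t (shift eps p) in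
  let g := gmet N H W m in
  let X := fun p c => nvec H p c + F2 p * ellv p c + eps * m33 p * m3vec m33 (W 3%nat) p c in
  killing N g X /\
  (forall p, gform N g p (X p) (X p) = 2 * F2 p + eps ^ 2 * (m33 p) ^ 2) /\
  ((forall p, F2 p <= - (1/2) * eps ^ 2 * (m33 p) ^ 2) ->
     forall p, gform N g p (X p) (X p) <= 0).
Proof.
  intros m m33 F2 g X.
  set (Y := v_component eps H Phi f).
  assert (HX : X = killing_field eps Y).
  { do 2 (apply functional_extensionality; intro).
    apply (frame_field_eq N eps mt H F2t f Phi W); assumption. }
  assert (Hnorm : forall p, gform N g p (X p) (X p) = 2 * F2 p + eps ^ 2 * (m33 p) ^ 2).
  { intro p. rewrite HX. apply (frame_field_norm N eps mt H F2t f Phi W); assumption. }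
  split; [|split; [exact Hnorm|]].
  - rewrite HX. apply killing_reduction; [exact HN| |].
    + intro p. apply (v_component_all_pd N eps H f Phi); assumption.
    + intros p a b Ha Hb.
      apply (metric_entries N eps mt H F2t f Phi Et u0 W dH dPhi df); assumption.
  - intros Hneg p. rewrite Hnorm. specialize (Hneg p). lra.
Qed.
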